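(* Let $\mathcal{F}\subseteq 2^{\mathcal{P}}$. The zero locus in $\mathbb{B}^n$ of the polynomial $\lambda(\bar T)=\prod_{F\in\mathcal{F}}\gamma(\varphi(F),\bar T)\in\mathbb{B}(\bar T)$ is exactly $\varphi(\mathcal{F}^* )=\{\varphi(F'):F'\in\mathcal{F}^*\}$.
   Context: $\mathbb{B}=\mathbb{F}_2$, $\mathcal{P}=\{P_1,\ldots,P_n\}$, $\mathbb{B}(\bar T)=\mathbb{F}_2[T_1,\ldots,T_n]/\langle T_i^2-T_i\rangle$. $\varphi:2^{\mathcal{P}}\to\mathbb{B}^n$ sends a set to its indicator vector. $\gamma(\bar X,\bar Y)=\prod_{i=1}^n(X_iY_i+Y_i+1)+1$. $\mathcal{F}^*=\{F'\subseteq F: F\in\mathcal{F}\}$. *)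

From HB Require Import structures.
From mathcomp Require Import all_boot all_algebra.
From mathcomp Require Import mpoly.
Set Implicit Arguments. Unset Strict Implicit. Unset Printing Implicit Defensive.
Import GRing.Theory.
Local Open Scope ring_scope.

(* B = F_2 ; P = {P_1,...,P_n} is represented by 'I_n ; points of B^n are
   finite functions 'I_n -> 'F_2. *)

Definition phi (n : nat) (F : {set 'I_n}) : {ffun 'I_n -> 'F_2} :=
  [ffun i => (i \in F)%:R].

Definition gammaP (n : nat) (x : 'I_n -> 'F_2) : {mpoly 'F_2[n]} :=
  \prod_(i < n) (x i *: 'X_i + 'X_i + 1) + 1.

Definition lambdaP (n : nat) (Fam : {set {set 'I_n}}) : {mpoly 'F_2[n]} :=
  \prod_(F in Fam) gammaP (phi F).

Definition Fstar (n : nat) (Fam : {set {set 'I_n}}) : {set {set 'I_n}} :=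
  [set F' : {set 'I_n} | [exists F in Fam, F' \subset F]].

Definition zero_locus (n : nat) (p : {mpoly 'F_2[n]}) : {set {ffun 'I_n -> 'F_2}} :=
  [set v : {ffun 'I_n -> 'F_2} | p.@[v] == 0].

(* Over F_2 a factor [x_i T_i + T_i + 1] vanishes exactly when [T_i = 1] and
   [x_i = 0], so [gamma(x, v) = 0] iff the product is [1] iff the support of
   [v] lies inside the support of [x].  Hence [lambda(v) = 0] iff the support
   of [v] lies inside some member of the family, i.e. belongs to its downward
   closure; and since [phi] is a bijection whose inverse takes supports, this
   says that [v] is [phi] of a member of [F^*]. *)

From mathcomp Require Import all_boot all_algebra.
From mathcomp Require Import mpoly.
Set Implicit Arguments. Unset Strict Implicit. Unset Printing Implicit Defensive.
Import GRing.Theory.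
Local Open Scope ring_scope.

Lemma F2_eq0_or_eq1 (x : 'F_2) : x = 0 \/ x = 1.
Proof. by case: x => [[|[|k]] lt_x2] //; [left | right]; apply: val_inj. Qed.

Lemma F2_neq0 (x : 'F_2) : (x != 0) = (x == 1).
Proof. by case: (F2_eq0_or_eq1 x) => ->. Qed.

Lemma F2_addr1_eq0 (x : 'F_2) : (x + 1 == 0) = (x == 1).
Proof. by case: (F2_eq0_or_eq1 x) => ->. Qed.

Lemma F2_gamma_factor_neq0 (x y : 'F_2) :
  (x * y + y + 1 != 0) = (y != 0) ==> (x != 0).
Proof. by case: (F2_eq0_or_eq1 x) => ->; case: (F2_eq0_or_eq1 y) => ->. Qed.

Definition supp (n : nat) (v : {ffun 'I_n -> 'F_2}) : {set 'I_n} :=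
  [set i | v i != 0].

Lemma phiK (n : nat) : cancel (@phi n) (@supp n).
Proof. by move=> F; apply/setP => i; rewrite inE ffunE; case: (i \in F). Qed.

Lemma suppK (n : nat) : cancel (@supp n) (@phi n).
Proof.
move=> v; apply/ffunP => i; rewrite ffunE inE.
by case: (F2_eq0_or_eq1 (v i)) => ->.
Qed.

Lemma gammaP_eval_eq0 (n : nat) (x v : 'I_n -> 'F_2) :
  ((gammaP x).@[v] == 0) = [forall i, (v i != 0) ==> (x i != 0)].
Proof.
rewrite /gammaP mevalD meval1 rmorph_prod /=.
under eq_bigr => i _ do rewrite !mevalD mevalZ mevalXU meval1.
rewrite F2_addr1_eq0 -F2_neq0.
apply/negP/forallP => [nz i | all_nz /prodf_eq0 [i _]].
  rewrite -F2_gamma_factor_neq0; apply/negP => zi.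
  by apply: nz; apply/prodf_eq0; exists i.
by apply/negP; rewrite F2_gamma_factor_neq0.
Qed.

Lemma gammaP_phi_eval_eq0 (n : nat) (F : {set 'I_n}) (v : {ffun 'I_n -> 'F_2}) :
  ((gammaP (phi F)).@[v] == 0) = (supp v \subset F).
Proof.
rewrite gammaP_eval_eq0 -{2}(phiK F) /supp.
apply/forallP/subsetP => sub i.
  by rewrite !inE; apply/implyP; apply: sub.
by apply/implyP => vi; have := sub i; rewrite !inE; apply.
Qed.

Lemma lambdaP_eval_eq0 (n : nat) (Fam : {set {set 'I_n}}) (v : {ffun 'I_n -> 'F_2}) :
  ((lambdaP Fam).@[v] == 0) = (supp v \in Fstar Fam).
Proof.
rewrite /lambdaP rmorph_prod inE.
apply/prodf_eq0/existsP => [[F FamF] | [F /andP [FamF]]].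
  by rewrite gammaP_phi_eval_eq0 => sub; exists F; rewrite FamF.
by rewrite -gammaP_phi_eval_eq0; exists F.
Qed.

Theorem mainTheorem12 (n : nat) (Fam : {set {set 'I_n}}) :
  zero_locus (lambdaP Fam) = [set phi F' | F' in Fstar Fam].
Proof.
rewrite (can2_imset_pre _ (@phiK n) (@suppK n)).
by apply/setP => v; rewrite /zero_locus [in RHS]inE inE lambdaP_eval_eq0.
Qed.
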